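(* Let $\beta=0$, $R\ge0$, and let $D>0$ be odd. Let $\alpha_\infty^D$ be the maximum value of $\alpha_0$ over all numerical walls for the Chern character $(-R,0,D,0)$ on $\mathbb{P}^3$. Then $D-1<\alpha_\infty^D\le D$.
   Context: On $\mathbb{P}^3$ with hyperplane class $H$, Chern characters are the vectors of coefficients of $1,H,H^2,H^3$. For $v=(-R,0,D,0)$ and the Bayer–Macrì–Toda stability conditions $\sigma_{0,\alpha,s}$ ($\alpha,s>0$; central charge $Z=-(\operatorname{ch}_3-(s+\frac16)\alpha^2\operatorname{ch}_1)+\sqrt{-1}(\operatorname{ch}_2-\frac{\alpha^2}{2}\operatorname{ch}_0)$), a numerical wall is a curve $(s+\frac16)\alpha^2=\alpha_0^2/6$ with $\alpha_0^2=6e/c$, where $(r,c,d,e)=\operatorname{ch}(A)$ for some $A\in D^b(\mathbb{P}^3)$ with $c>0$ satisfying $0<d<D$, $0<c(6e)\le\min\{4d^2,4(D-d)^2\}$, and $-\frac{c(2D-2d)}{6e}-R\le r\le\frac{2cd}{6e}$. *)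

From Stdlib Require Import Reals ZArith.
Open Scope R_scope.

(* (r,c,d,e) is the Chern character of some object of D^b(P^3) iff it lies in
   the Z-span of ch(O), ch(O(1)), ch(O(2)), ch(O(3)) (these generate K_0(P^3),
   and every class in K_0 is the class of an object). *)
Definition is_ch_P3 (r c d e : R) : Prop :=
  exists a0 a1 a2 a3 : Z,
    r = IZR a0 + IZR a1 + IZR a2 + IZR a3 /\
    c = IZR a1 + 2 * IZR a2 + 3 * IZR a3 /\
    d = IZR a1 / 2 + 4 * IZR a2 / 2 + 9 * IZR a3 / 2 /\
    e = IZR a1 / 6 + 8 * IZR a2 / 6 + 27 * IZR a3 / 6.

(* ch(A) = (r,c,d,e) gives a numerical wall for v = (-Rk,0,D,0) (beta = 0). *)
Definition numerical_wall_class (Rk D r c d e : R) : Prop :=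
  is_ch_P3 r c d e /\
  0 < c /\
  0 < d < D /\
  0 < c * (6 * e) /\
  c * (6 * e) <= Rmin (4 * d ^ 2) (4 * (D - d) ^ 2) /\
  - (c * (2 * D - 2 * d)) / (6 * e) - Rk <= r <= 2 * c * d / (6 * e).

Definition wall_alpha0 (c e : R) : R := sqrt (6 * e / c).

Definition is_wall_alpha0 (Rk D a : R) : Prop :=
  exists r c d e, numerical_wall_class Rk D r c d e /\ a = wall_alpha0 c e.

(** On P^3 the components ch_1 and 6 ch_3 of every class are integers, so a
    wall has alpha_0^2 = 6e/c = n/k with positive integers k, n, and the wall
    inequality gives k n <= min(4d^2, 4(D-d)^2) <= D^2.  Hence alpha_0 <= D, and
    alpha_0 takes only finitely many values, so the maximum exists.  For
    D = 2j+1 the class with c = 1, d = D/2 and 6e = 1 + 6j + 6q is the Chern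
    character of a combination of O, O(1), O(2), O(3) and defines a wall with
    alpha_0^2 = 6e; choosing q with (D-1)^2 < 1 + 6j + 6q <= D^2 gives a wall
    with alpha_0 > D - 1. *)

From Stdlib Require Import Reals ZArith Lra Lia Psatz List Classical.
Open Scope R_scope.

Lemma finite_set_has_max (S : R -> Prop) (l : list R) :
  (forall a, S a -> In a l) -> (exists a, S a) ->
  exists m, S m /\ forall a, S a -> a <= m.
Proof.
  revert S; induction l as [|x l IH]; intros S Sl [a Sa].
  - destruct (Sl a Sa).
  - set (S' := fun a => S a /\ a <> x).
    assert (S'l : forall a, S' a -> In a l).
    { intros b [Sb Hb]; destruct (Sl b Sb) as [->|]; [contradiction|assumption]. }
    destruct (classic (exists b, S' b)) as [HS'|HS'].
    + destruct (IH S' S'l HS') as [m [[Sm _] Mm]].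
      assert (below_m : forall b, S b -> b <> x -> b <= m)
        by (intros b Sb Hb; apply Mm; split; assumption).
      destruct (classic (S x)) as [Sx|Sx].
      * destruct (Rle_dec x m).
        -- exists m; split; [exact Sm|].
           intros b Sb; destruct (Req_dec b x) as [->|]; auto.
        -- exists x; split; [exact Sx|].
           intros b Sb; destruct (Req_dec b x) as [->|Hb]; [lra|].
           specialize (below_m b Sb Hb); lra.
      * exists m; split; [exact Sm|].
        intros b Sb; apply below_m; [exact Sb|]; intros ->; contradiction.
    + exists x.
      assert (only_x : forall b, S b -> b = x).
      { intros b Sb; apply NNPP; intros Hb; apply HS'; exists b; split; assumption. }
      split; [rewrite <- (only_x a Sa); exact Sa|].
      intros b Sb; rewrite (only_x b Sb); lra.
Qed.

Lemma is_ch_P3_integral r c d e :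
  is_ch_P3 r c d e -> exists k n : Z, c = IZR k /\ 6 * e = IZR n.
Proof.
  intros [a0 [a1 [a2 [a3 [_ [Hc [_ He]]]]]]].
  exists (a1 + 2 * a2 + 3 * a3)%Z, (a1 + 8 * a2 + 27 * a3)%Z.
  rewrite !plus_IZR, !mult_IZR; split; lra.
Qed.

Lemma is_ch_P3_odd_half (j q : Z) :
  is_ch_P3 0 1 ((2 * IZR j + 1) / 2) ((1 + 6 * IZR j + 6 * IZR q) / 6).
Proof.
  exists (j - q - 1)%Z, (1 - 2 * j + 3 * q)%Z, (j - 3 * q)%Z, q.
  repeat first [rewrite minus_IZR | rewrite plus_IZR | rewrite mult_IZR].
  repeat split; field.
Qed.

Lemma Rmin_sq_le (D d : R) :
  0 <= d <= D -> Rmin (4 * d ^ 2) (4 * (D - d) ^ 2) <= D ^ 2.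
Proof.
  intros Hd; destruct (Rle_dec d (D - d)).
  - eapply Rle_trans; [apply Rmin_l|]; nra.
  - eapply Rle_trans; [apply Rmin_r|]; nra.
Qed.

Lemma numerical_wall_class_integral Rk D r c d e :
  numerical_wall_class Rk D r c d e ->
  exists k n : Z, c = IZR k /\ 6 * e = IZR n /\ (1 <= k)%Z /\ (1 <= n)%Z /\
    IZR k * IZR n <= D ^ 2.
Proof.
  intros [Hch [Hc [Hd [Hce [Hmin _]]]]].
  destruct (is_ch_P3_integral r c d e Hch) as [k [n [Ek En]]].
  assert (He : 0 < 6 * e) by nra.
  rewrite Ek in Hc; rewrite En in He; apply lt_IZR in Hc, He.
  exists k, n; rewrite <- Ek, <- En; repeat split; try assumption; try lia.
  eapply Rle_trans; [exact Hmin|]; apply Rmin_sq_le; lra.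
Qed.

Lemma wall_alpha0_le Rk D r c d e :
  numerical_wall_class Rk D r c d e -> wall_alpha0 c e <= D.
Proof.
  intros W; pose proof W as [_ [_ [Hd _]]].
  destruct (numerical_wall_class_integral _ _ _ _ _ _ W)
    as [k [n [Ek [En [Hk [Hn Hkn]]]]]].
  apply IZR_le in Hk, Hn.
  assert (ratio_le_product : IZR n / IZR k <= IZR k * IZR n).
  { apply (Rmult_le_reg_r (IZR k)); [lra|].
    unfold Rdiv; rewrite Rmult_assoc, Rinv_l by lra.
    assert (1 <= IZR k * IZR k) by nra; nra. }
  unfold wall_alpha0; rewrite En, Ek.
  rewrite <- (sqrt_pow2 D) by lra; apply sqrt_le_1_alt; lra.
Qed.

Definition Z_range (N : Z) : list Z := map Z.of_nat (seq 1 (Z.to_nat N)).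

Lemma in_Z_range N z : (1 <= z <= N)%Z -> In z (Z_range N).
Proof.
  intros Hz; apply in_map_iff; exists (Z.to_nat z); split; [lia|].
  apply in_seq; lia.
Qed.

Definition alpha0_candidates (N : Z) : list R :=
  map (fun p => sqrt (IZR (snd p) / IZR (fst p))) (list_prod (Z_range N) (Z_range N)).

Lemma is_wall_alpha0_candidate Rk (D : Z) a :
  is_wall_alpha0 Rk (IZR D) a -> In a (alpha0_candidates (D * D)).
Proof.
  intros [r [c [d [e [W ->]]]]].
  destruct (numerical_wall_class_integral _ _ _ _ _ _ W)
    as [k [n [Ek [En [Hk [Hn Hkn]]]]]].
  assert (HkN : (k * n <= D * D)%Z) by (apply le_IZR; rewrite !mult_IZR; simpl in Hkn; lra).
  apply in_map_iff; exists (k, n); split.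
  - unfold wall_alpha0; simpl; rewrite En, Ek; reflexivity.
  - apply in_prod; apply in_Z_range; nia.
Qed.

Lemma odd_half_wall (Rk D n : R) :
  0 <= Rk -> 0 < D -> 0 < n <= D ^ 2 -> is_ch_P3 0 1 (D / 2) (n / 6) ->
  numerical_wall_class Rk D 0 1 (D / 2) (n / 6).
Proof.
  intros HRk HD Hn Hch.
  assert (Hmin : Rmin (4 * (D / 2) ^ 2) (4 * (D - D / 2) ^ 2) = D ^ 2)
    by (unfold Rmin; destruct (Rle_dec _ _); field).
  assert (Hlow : 0 <= 1 * (2 * D - 2 * (D / 2)) / (6 * (n / 6)))
    by (apply Rle_mult_inv_pos; lra).
  assert (Hup : 0 <= 2 * 1 * (D / 2) / (6 * (n / 6)))
    by (apply Rle_mult_inv_pos; lra).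
  unfold numerical_wall_class; rewrite Hmin; repeat split; try assumption; lra.
Qed.

Lemma exists_1_mod_6_between_squares (j : Z) :
  (0 <= j)%Z ->
  exists q : Z, (2 * j * (2 * j) < 1 + 6 * j + 6 * q <= (2 * j + 1) * (2 * j + 1))%Z.
Proof.
  (* For q = floor(j(2j-1)/3), 6q lies in (4j^2 - 2j - 6, 4j^2 - 2j], inside
     the required window (4j^2 - 6j - 1, 4j^2 - 2j] for j >= 2; for j <= 1, q = 0 works. *)
  intros Hj; exists (j * (2 * j - 1) / 3)%Z.
  pose proof (Z.div_mod (j * (2 * j - 1)) 3 ltac:(lia)).
  pose proof (Z.mod_pos_bound (j * (2 * j - 1)) 3 ltac:(lia)).
  destruct (Z.eq_dec j 0) as [->|]; [simpl; lia|nia].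
Qed.

Lemma odd_wall_alpha0_gt (Rk D : Z) :
  (0 <= Rk)%Z -> (0 < D)%Z -> Z.odd D = true ->
  exists a, is_wall_alpha0 (IZR Rk) (IZR D) a /\ IZR D - 1 < a.
Proof.
  intros HRk HD Hodd; apply Z.odd_spec in Hodd; destruct Hodd as [j ->].
  rewrite plus_IZR, mult_IZR.
  destruct (exists_1_mod_6_between_squares j ltac:(lia)) as [q Hq].
  set (n := 1 + 6 * IZR j + 6 * IZR q).
  assert (Hn : (2 * IZR j) ^ 2 < n <= (2 * IZR j + 1) ^ 2).
  { destruct Hq as [Hq1 Hq2]; apply IZR_lt in Hq1; apply IZR_le in Hq2.
    repeat first [rewrite plus_IZR in Hq1 | rewrite mult_IZR in Hq1
                 | rewrite plus_IZR in Hq2 | rewrite mult_IZR in Hq2].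
    unfold n; simpl; split; nra. }
  assert (Hj : 0 <= IZR j) by (apply IZR_le; lia).
  exists (sqrt n); split.
  - exists 0, 1, ((2 * IZR j + 1) / 2), (n / 6); split.
    + apply odd_half_wall; [apply IZR_le; exact HRk|lra|nra|].
      apply is_ch_P3_odd_half.
    + unfold wall_alpha0; f_equal; field.
  - replace (2 * IZR j + 1 - 1) with (sqrt ((2 * IZR j) ^ 2))
      by (rewrite sqrt_pow2; lra).
    apply sqrt_lt_1_alt; split; [apply pow2_ge_0|]; lra.
Qed.

Theorem lemma4p2 (Rk D : Z) :
  (0 <= Rk)%Z -> (0 < D)%Z -> Z.odd D = true ->
  exists alpha_inf : R,
    is_wall_alpha0 (IZR Rk) (IZR D) alpha_inf /\
    (forall a, is_wall_alpha0 (IZR Rk) (IZR D) a -> a <= alpha_inf) /\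
    IZR D - 1 < alpha_inf <= IZR D.
Proof.
  intros HRk HD Hodd.
  destruct (odd_wall_alpha0_gt Rk D HRk HD Hodd) as [a0 [Wa0 Ha0]].
  destruct (finite_set_has_max (is_wall_alpha0 (IZR Rk) (IZR D))
              (alpha0_candidates (D * D)) (is_wall_alpha0_candidate (IZR Rk) D)
              (ex_intro _ a0 Wa0)) as [m [Wm Mm]].
  exists m; split; [exact Wm|split; [exact Mm|split]].
  - specialize (Mm a0 Wa0); lra.
  - destruct Wm as [r [c [d [e [W ->]]]]]; exact (wall_alpha0_le _ _ _ _ _ _ W).
Qed.
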